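(* Let $n,d,a,k$ be positive integers and suppose the triple $(n,d,a)$ is bad. Then (1) $(n,kd,a)$ is bad; (2) $(kn,d,a)$ is bad; (3) $(kn,kd,ka)$ is bad.
   Context: For positive integers $N,D,A$, let $R=\mathbb{C}[x_1,\dots,x_N]$ with $\mathfrak{S}_N$ permuting variables and $R_A^{\mathfrak{S}_N}$ the symmetric polynomials homogeneous of degree $A$. The triple $(N,D,A)$ is good if there exists $f\in R_A^{\mathfrak{S}_N}$ such that $x_1^D-x_N^D,\dots,x_{N-1}^D-x_N^D,f$ is a regular sequence (equivalently, $f$ has no zero on $\mathcal{V}_D=\{(z_1,\dots,z_N)\in\mathbb{C}^N: z_i^D=1\ \forall i,\ z_N=1\}$); otherwise it is bad. *)

From mathcomp Require Import all_boot all_algebra.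
From mathcomp Require Import reals complex.
From mathcomp Require Import mpoly.
Set Implicit Arguments.
Unset Strict Implicit.
Unset Printing Implicit Defensive.
Import GRing.Theory.
Local Open Scope ring_scope.

Definition in_VD (R : realType) (N D : nat) (z : 'I_N -> R[i]) : Prop :=
  (forall i : 'I_N, z i ^+ D = 1) /\
  (forall i : 'I_N, nat_of_ord i = N.-1 -> z i = 1).

(* (N, D, A) is good iff some symmetric f, homogeneous of degree A, has no
   zero on V_D (the regular-sequence criterion, stated in its equivalent
   zero-set form given in the definition). *)
Definition good (R : realType) (N D A : nat) : Prop :=
  exists f : {mpoly R[i][N]},
    [/\ f \is symmetric, f \is A.-homog &
        forall z : 'I_N -> R[i], in_VD D z -> f.@[z] != 0].

Definition bad (R : realType) (N D A : nat) : Prop := ~ good R N D A.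

(* Part (1) holds because V_d is contained in V_(kd).  For (2) and (3), index the
   k*n variables of a good f by pairs (r, i) of a block r < k and an offset i < n,
   and pull f back along x_(r,i) = c_r y_i.  With c = 1 this directly gives a good
   polynomial for (n, d, a).  With c_r = z^(r+1), z a primitive k-th root of unity,
   the pull-back h is moreover invariant under y_i -> z y_i, which only permutes
   blocks, so all exponents of h are multiples of k and h(y) = g(y_1^k, ..., y_n^k)
   with g symmetric of degree a.  Finally g has no zero on V_d: if x is in V_d and
   w_i is a k-th root of x_i, then (c_r w_i) lies in V_(kd) and g(x) = f(c_r w_i). *)

From mathcomp Require Import all_boot all_algebra.
From mathcomp Require Import fingroup perm cyclic separable cyclotomic.
From mathcomp Require Import reals complex.
From mathcomp Require Import mpoly.
From mathcomp Require Import zify.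
Set Implicit Arguments.
Unset Strict Implicit.
Unset Printing Implicit Defensive.
Import GRing.Theory Num.Theory.
Local Open Scope ring_scope.

Lemma prim_root_exists (C : numClosedFieldType) (k : nat) :
  (0 < k)%N -> {z : C | k.-primitive_root z}.
Proof.
move=> k_gt0; pose p : {poly C} := 'X^k - 1.
have [r Dp] := closed_field_poly_normal p.
rewrite (monicP _) ?monicXnsubC // scale1r in Dp.
have r_roots : all k.-unity_root r.
  by apply/allP => z; rewrite -root_prod_XsubC -Dp.
have size_r : (k < (size r).+1)%N by rewrite -(size_prod_XsubC r id) -Dp size_XnsubC.
apply/sigW; have [|z] := hasP (has_prim_root k_gt0 r_roots _ size_r); last by exists z.
by rewrite -separable_prod_XsubC -Dp separable_Xn_sub_1 // pnatr_eq0 -lt0n.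
Qed.

Section Composition.
Variable R : comNzRingType.

Lemma comp_mpolyA a b c (f : {mpoly R[a]}) (t : a.-tuple {mpoly R[b]})
    (u : b.-tuple {mpoly R[c]}) :
  (f \mPo t) \mPo u = f \mPo [tuple tnth t j \mPo u | j < a].
Proof.
rewrite [f \mPo t]comp_mpolyE [RHS]comp_mpolyE raddf_sum /=.
apply: eq_bigr => m _; rewrite comp_mpolyZ rmorph_prod /=; congr (_ *: _).
by apply: eq_bigr => j _; rewrite rmorphXn tnth_mktuple.
Qed.

Lemma msym_comp_mpolyX n (s : 'S_n) (p : {mpoly R[n]}) :
  msym s p = p \mPo [tuple 'X_(s i) | i < n].
Proof.
rewrite -[msym s p]comp_mpoly_id msym_mPo; congr (_ \mPo _).
by apply: eq_from_tnth => i; rewrite !tnth_mktuple.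
Qed.

Lemma comp_mpoly_sym_invariant a b (f : {mpoly R[a]}) (t : a.-tuple {mpoly R[b]})
    (u : b.-tuple {mpoly R[b]}) (s : 'S_a) :
  f \is symmetric -> (forall j, tnth t j \mPo u = tnth t (s j)) ->
  (f \mPo t) \mPo u = f \mPo t.
Proof.
move=> /issymP f_sym tu; rewrite comp_mpolyA -[in RHS](f_sym s) msym_mPo.
by congr (_ \mPo _); apply: eq_from_tnth => j; rewrite !tnth_mktuple tu.
Qed.

Lemma comp_mpoly_sym a b (f : {mpoly R[a]}) (t : a.-tuple {mpoly R[b]}) :
  f \is symmetric ->
  (forall sb : 'S_b, exists sa : 'S_a, forall j, msym sb (tnth t j) = tnth t (sa j)) ->
  f \mPo t \is symmetric.
Proof.
move=> f_sym t_sym; apply/issymP => sb; have [sa tsa] := t_sym sb.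
rewrite msym_comp_mpolyX (comp_mpoly_sym_invariant (s := sa)) // => j.
by rewrite -msym_comp_mpolyX.
Qed.

Lemma comp_mpoly_dhomog a b (f : {mpoly R[a]}) (t : a.-tuple {mpoly R[b]}) d e :
  f \is d.-homog -> (forall j, tnth t j \is e.-homog) -> f \mPo t \is (e * d).-homog.
Proof.
move=> /dhomogP f_hom t_hom; rewrite comp_mpolyE big_seq.
apply: rpred_sum => m /f_hom <-; apply: dhomogZ; rewrite /= mdegE big_distrr /=.
apply: (big_ind2 (fun (d' : nat) (p : {mpoly R[b]}) => p \is d'.-homog)).
- exact: dhomog1.
- by move=> ? ? ? ? ? ?; exact: dhomogM.
- by move=> j _; exact: dhomogMn.
Qed.

Lemma mcoeff_comp_mpoly_scale n (c : 'I_n -> R) (p : {mpoly R[n]}) m :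
  (p \mPo [tuple c i *: 'X_i | i < n])@_m = (\prod_i c i ^+ m i) * p@_m.
Proof.
have -> : p@_m = (\sum_(m' <- msupp p) p@_m' *: 'X_[m'])@_m by rewrite -mpolyE.
rewrite comp_mpolyEX !raddf_sum mulr_sumr /=.
apply: eq_bigr => m' _; rewrite comp_mpolyX.
rewrite (eq_bigr (fun i => c i ^+ m' i *: 'X_i ^+ m' i)); last first.
  by move=> i _; rewrite tnth_mktuple exprZn.
rewrite scaler_prod -mpolyXE_id !mcoeffZ !mcoeffX.
by case: eqP => [->|_]; rewrite ?mulr0 // mulrCA mulrA.
Qed.

End Composition.

Lemma msupp_dvd_of_scale_invariant (R : idomainType) n k (z : R) i (p : {mpoly R[n]}) :
  k.-primitive_root z ->
  p \mPo [tuple (if l == i then z else 1) *: 'X_l | l < n] = p ->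
  forall m, m \in msupp p -> (k %| m i)%N.
Proof.
move=> z_prim p_inv m; rewrite mcoeff_msupp => pm_neq0.
have := mcoeff_comp_mpoly_scale (fun l => if l == i then z else 1) p m.
rewrite p_inv (bigD1 i) //= eqxx big1 ?mulr1 => [pm_eq|l /negbTE ->]; last first.
  exact: expr1n.
by rewrite (prim_order_dvd z_prim); apply/eqP/(mulIf pm_neq0); rewrite -pm_eq mul1r.
Qed.

Section Contraction.
Variables (R : comNzRingType) (n k : nat).

Definition mdivn (m : 'X_{1..n}) : 'X_{1..n} := [multinom (m i %/ k)%N | i < n].

Definition mcontract (h : {mpoly R[n]}) := \sum_(m <- msupp h) h@_m *: 'X_[mdivn m].

Variable h : {mpoly R[n]}.
Hypothesis k_gt0 : (0 < k)%N.
Hypothesis h_dvd : forall m, m \in msupp h -> forall i, (k %| m i)%N.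

Lemma mcoeff_mcontract mu : (mcontract h)@_mu = h@_(mu *+ k)%MM.
Proof.
rewrite /mcontract raddf_sum /= [h in RHS]mpolyE raddf_sum /=.
apply: eq_big_seq => m m_supp; rewrite !mcoeffZ !mcoeffX; congr (_ * (_ : bool)%:R).
apply/eqP/eqP => [<-|->]; apply/mnmP => i.
  by rewrite mulmnE mnmE divnK ?h_dvd.
by rewrite /mdivn mnmE mulmnE mulnK.
Qed.

Lemma mcontract_sym : h \is symmetric -> mcontract h \is symmetric.
Proof.
move=> /issymP h_sym; apply/issymP => s; apply/mpolyP => mu.
rewrite mcoeff_sym !mcoeff_mcontract -[in RHS](h_sym s) mcoeff_sym.
by congr (mcoeff _ _); apply/mnmP => i; rewrite !(mnmE, mulmnE).
Qed.

Lemma mcontract_dhomog e : h \is (k * e).-homog -> mcontract h \is e.-homog.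
Proof.
move=> /dhomogP h_hom; apply/dhomogP => mu.
rewrite mcoeff_msupp mcoeff_mcontract -mcoeff_msupp => /h_hom.
by rewrite /= mdegMn mulnC => /eqP; rewrite eqn_pmul2l // => /eqP.
Qed.

Lemma meval_mcontract w : (mcontract h).@[fun i => w i ^+ k] = h.@[w].
Proof.
rewrite /mcontract raddf_sum /= mevalE; apply: eq_big_seq => m m_supp.
rewrite mevalZ mevalX; congr (_ * _); apply: eq_bigr => i _.
by rewrite -exprM mnmE mulnC divnK ?h_dvd.
Qed.

End Contraction.

Section BlockIndices.
Variables (k n : nat).
Hypothesis n_gt0 : (0 < n)%N.
Local Notation N := (k * n)%N.

Lemma block_of_subproof (j : 'I_N) : (j %/ n < k)%N.
Proof. by rewrite ltn_divLR. Qed.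

Definition block_of (j : 'I_N) : 'I_k := Ordinal (block_of_subproof j).
Definition offset_of (j : 'I_N) : 'I_n := Ordinal (ltn_pmod j n_gt0).

Lemma join_index_subproof (r : 'I_k) (i : 'I_n) : (r * n + i < N)%N.
Proof.
apply: (@leq_trans (r.+1 * n)); first by rewrite mulSnr ltn_add2l.
by rewrite leq_mul2r ltn_ord orbT.
Qed.

Definition join_index r i : 'I_N := Ordinal (join_index_subproof r i).

Lemma block_of_join r i : block_of (join_index r i) = r.
Proof. by apply: val_inj; rewrite /= divnMDl // divn_small ?addn0. Qed.

Lemma offset_of_join r i : offset_of (join_index r i) = i.
Proof. by apply: val_inj; rewrite /= modnMDl modn_small. Qed.

Lemma join_indexK j : join_index (block_of j) (offset_of j) = j.
Proof. by apply: val_inj; rewrite /= -divn_eq. Qed.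

Lemma block_offset_of_last (j : 'I_N) :
  j = N.-1 :> nat -> block_of j = k.-1 :> nat /\ offset_of j = n.-1 :> nat.
Proof.
move=> j_last; have k_gt0 : (0 < k)%N by case: k j j_last => [|?] [].
have j_eq : (j : nat) = (k.-1 * n + n.-1)%N by rewrite j_last; nia.
have n1_lt : (n.-1 < n)%N by rewrite prednK.
by rewrite /= j_eq divnMDl // divn_small // addn0 modnMDl modn_small.
Qed.

Lemma block_perm_subproof (b : 'S_n) (rho : 'I_n -> 'S_k) :
  injective (fun j : 'I_N =>
    join_index (rho (offset_of j) (block_of j)) (b (offset_of j))).
Proof.
move=> j1 j2 /= eq_j; have := congr1 offset_of eq_j; rewrite !offset_of_join.
move=> /perm_inj eq_off; move: eq_j => /(congr1 block_of).
rewrite !block_of_join eq_off.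
by move=> /perm_inj eq_blk; rewrite -(join_indexK j1) -(join_indexK j2) eq_off eq_blk.
Qed.

Definition block_perm b rho : 'S_N := perm (@block_perm_subproof b rho).

Lemma block_permE b rho j :
  block_perm b rho j = join_index (rho (offset_of j) (block_of j)) (b (offset_of j)).
Proof. by rewrite permE. Qed.

End BlockIndices.

Section Spread.
Variables (C : comNzRingType) (k n : nat).
Hypothesis n_gt0 : (0 < n)%N.
Local Notation N := (k * n)%N.
Local Notation block_of := (block_of n_gt0).
Local Notation offset_of := (offset_of n_gt0).
Local Notation block_perm := (block_perm n_gt0).

Definition spread (c : 'I_k -> C) : N.-tuple {mpoly C[n]} :=
  [tuple c (block_of j) *: 'X_(offset_of j) | j < N].

Variable c : 'I_k -> C.

Lemma comp_spread_sym (f : {mpoly C[N]}) :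
  f \is symmetric -> f \mPo spread c \is symmetric.
Proof.
move=> f_sym; apply: comp_mpoly_sym => // s; exists (block_perm s (fun=> 1%g)) => j.
rewrite block_permE !tnth_mktuple block_of_join offset_of_join perm1.
by rewrite msymZ /msym mmapX mmap1U.
Qed.

Lemma comp_spread_dhomog (f : {mpoly C[N]}) d :
  f \is d.-homog -> f \mPo spread c \is d.-homog.
Proof.
move=> f_hom; rewrite -[d]mul1n; apply: comp_mpoly_dhomog => // j.
by rewrite tnth_mktuple dhomogZ // dhomogX /= mdeg1.
Qed.

Lemma meval_comp_spread (f : {mpoly C[N]}) w :
  (f \mPo spread c).@[w] = f.@[fun j => c (block_of j) * w (offset_of j)].
Proof.
by rewrite comp_mpoly_meval; apply: meval_eq => j; rewrite tnth_mktuple mevalZ mevalXU.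
Qed.

End Spread.

Section SpreadRoots.
Variables (C : idomainType) (k n : nat) (z : C).
Hypotheses (n_gt0 : (0 < n)%N) (z_prim : k.-primitive_root z).

(* Scaling y_i by z cyclically shifts the blocks of the variables x_(r,i), which a
   symmetric f does not see. *)
Lemma comp_spread_root_invariant (f : {mpoly C[k * n]}) i :
  f \is symmetric ->
  (f \mPo spread n_gt0 (fun r => z ^+ r.+1))
     \mPo [tuple (if l == i then z else 1) *: 'X_l | l < n]
  = f \mPo spread n_gt0 (fun r => z ^+ r.+1).
Proof.
pose rot l := if l == i then perm (@ordS_inj k) else 1%g.
move=> f_sym; apply: (comp_mpoly_sym_invariant (s := block_perm n_gt0 1 rot)) => // j.
rewrite !tnth_mktuple comp_mpolyZ comp_mpolyXU -tnth_nth tnth_mktuple.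
rewrite block_permE block_of_join offset_of_join perm1 scalerA /rot.
case: eqP => _; last by rewrite perm1 mulr1.
by rewrite permE /= [in RHS]exprS (prim_expr_mod z_prim) mulrC.
Qed.

Lemma msupp_comp_spread_root_dvd (f : {mpoly C[k * n]}) :
  f \is symmetric ->
  forall m, m \in msupp (f \mPo spread n_gt0 (fun r => z ^+ r.+1)) ->
  forall i, (k %| m i)%N.
Proof.
move=> f_sym m m_supp i.
exact: msupp_dvd_of_scale_invariant z_prim (comp_spread_root_invariant i f_sym) _ m_supp.
Qed.

End SpreadRoots.

Lemma in_VD_spread (R : realType) k n (n_gt0 : (0 < n)%N) D (c : 'I_k -> R[i])
    (w : 'I_n -> R[i]) :
  (forall r, c r ^+ D = 1) -> (forall r : 'I_k, r = k.-1 :> nat -> c r = 1) ->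
  in_VD D w -> in_VD D (fun j => c (block_of n_gt0 j) * w (offset_of n_gt0 j)).
Proof.
move=> cD c_last [wD w_last]; split => j; first by rewrite exprMn cD wD mulr1.
by case/block_offset_of_last => blk_last off_last; rewrite c_last // w_last // mulr1.
Qed.

Lemma good_of_mul_exponent (R : realType) n d a k : good R n (k * d) a -> good R n d a.
Proof.
move=> [f [f_sym f_hom f_nz]]; exists f; split => // z [zd z_last].
by apply: f_nz; split => // i; rewrite mulnC exprM zd expr1n.
Qed.

Lemma good_of_mul_vars (R : realType) n d a k :
  (0 < n)%N -> good R (k * n) d a -> good R n d a.
Proof.
move=> n_gt0 [f [f_sym f_hom f_nz]]; exists (f \mPo spread n_gt0 (fun=> 1)); split.
- exact: comp_spread_sym.
- exact: comp_spread_dhomog.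
- move=> w w_VD; rewrite meval_comp_spread; apply: f_nz.
  apply: (@in_VD_spread _ _ _ n_gt0 _ (fun=> 1)) => // r; exact: expr1n.
Qed.

Lemma good_of_mul_all (R : realType) n d a k :
  (0 < n)%N -> (0 < k)%N -> good R (k * n) (k * d) (k * a) -> good R n d a.
Proof.
move=> n_gt0 k_gt0 [f [f_sym f_hom f_nz]].
have [z z_prim] := prim_root_exists R[i] k_gt0.
(* The exponent r.+1 makes the factor of the last block z ^+ k = 1. *)
pose h := f \mPo spread n_gt0 (fun r : 'I_k => z ^+ r.+1).
have h_dvd : forall m, m \in msupp h -> forall i, (k %| m i)%N :=
  msupp_comp_spread_root_dvd z_prim f_sym.
exists (mcontract k h); split.
- exact/(mcontract_sym k_gt0 h_dvd)/comp_spread_sym.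
- exact/(mcontract_dhomog k_gt0 h_dvd)/comp_spread_dhomog.
move=> x [xd x_last]; pose w i := k.-root (x i).
have x_pow : x =1 (fun i => w i ^+ k) by move=> i; rewrite /w rootCK.
rewrite (meval_eq _ x_pow) (meval_mcontract h_dvd) meval_comp_spread.
apply: f_nz; apply: (@in_VD_spread _ _ _ n_gt0 _ (fun r => z ^+ r.+1)).
- by move=> r; rewrite -exprM mulnCA exprM (prim_expr_order z_prim) expr1n.
- by move=> r ->; rewrite prednK // (prim_expr_order z_prim).
- split=> i; first by rewrite exprM rootCK // xd.
  by move=> /x_last x1; rewrite /w x1 rootC1.
Qed.

Theorem proposition3p22 (R : realType) (n d a k : nat) :
  (0 < n)%N -> (0 < d)%N -> (0 < a)%N -> (0 < k)%N ->
  bad R n d a ->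
  [/\ bad R n (k * d) a, bad R (k * n) d a & bad R (k * n) (k * d) (k * a)].
Proof.
move=> n_gt0 _ _ k_gt0 n_d_a_bad; split => good_lift; apply: n_d_a_bad.
- exact: good_of_mul_exponent good_lift.
- exact: good_of_mul_vars n_gt0 good_lift.
- exact: good_of_mul_all n_gt0 k_gt0 good_lift.
Qed.
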